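(* Let $X\in\mathcal M_{\mathbf r}$, $V\in\mathrm T_X\mathcal M_{\mathbf r}$, $Z\in\mathbb R^{n_1\times\cdots\times n_d}$ and $i,j\in[d]$. The tensor $W:=\mathcal P_X^i(\mathrm D_V\mathcal P_X^j)(Z)$ lies in the range of $\mathcal P_X^i$ and can be written $W(i_1,\dots,i_d)=U_1(i_1)\cdots U_{i-1}(i_{i-1})\,\delta\tilde V_i(i_i)\,\tilde U_{i+1}(i_{i+1})\cdots\tilde U_d(i_d)$ for a core $\delta\tilde V_i\in\mathbb R^{r_{i-1}\times n_i\times r_i}$, so that $W^{<i>}=(I_{n_i}\otimes X_{\le i-1})\delta\tilde V_i^L\tilde X_{\ge i+1}^\top$. If a matrix $B\in\mathbb R^{n_ir_{i-1}\times r_i}$ satisfies $W^{<i>}=(I_{n_i}\otimes X_{\le i-1})B\tilde X_{\ge i+1}^\top$, then $B=\delta\tilde V_i^L$.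
   Context: Fix $d\ge2$, positive integers $n_1,\dots,n_d$, $\mathbf r=(r_1,\dots,r_{d-1})$, $r_0=r_d=1$. Flattening $Z^{<\mu>}\in\mathbb R^{(n_1\cdots n_\mu)\times(n_{\mu+1}\cdots n_d)}$: rows indexed by $(i_1,\dots,i_\mu)$, columns by $(i_{\mu+1},\dots,i_d)$, colexicographic order. $\mathcal M_{\mathbf r}$: tensors with $(\mathrm{rank}\,Z^{<1>},\dots,\mathrm{rank}\,Z^{<d-1>})=\mathbf r$, a Riemannian submanifold of Euclidean space. $X$ has a minimal (sizes equal to TT-rank) left-orthogonal TT decomposition $U_1,\dots,U_d$ ($U_k\in\mathbb R^{r_{k-1}\times n_k\times r_k}$, $X(i_1,\dots,i_d)=U_1(i_1)\cdots U_d(i_d)$, $(U_k^L)^\top U_k^L=I$ for $k<d$, where $U^L=U^{<2>}$, $U^R=U^{<1>}$) and a minimal right-orthogonal TT decomposition $\tilde U_1,\dots,\tilde U_d$ ($\tilde U_k^R(\tilde U_k^R)^\top=I$ for $k\ge2$). Interface matrices: $X_{\le0}=1$, $X_{\le k}=(I_{n_k}\otimes X_{\le k-1})U_k^L$; $\tilde X_{\ge d+1}=1$, $\tilde X_{\ge k}^\top=\tilde U_k^R(\tilde X_{\ge k+1}^\top\otimes I_{n_k})$. Projectors for $Y\in\mathcal M_{\mathbf r}$ (independent of decomposition choices): $(\mathcal P_Y^kZ)^{<k>}=(I_{n_k}\otimes Y_{\le k-1}Y_{\le k-1}^\top-Y_{\le k}Y_{\le k}^\top)Z^{<k>}\tilde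 Y_{\ge k+1}\tilde Y_{\ge k+1}^\top$ for $k\in[d-1]$, $(\mathcal P_Y^dZ)^{<d>}=(I_{n_d}\otimes Y_{\le d-1}Y_{\le d-1}^\top)Z^{<d>}$. $(\mathrm D_V\mathcal P_X^j)Z:=\lim_{t\to0}(\mathcal P^j_{c(t)}Z-\mathcal P^j_{c(0)}Z)/t$ for a smooth curve $c$ in $\mathcal M_{\mathbf r}$ with $c(0)=X$, $c'(0)=V$. *)

From HB Require Import structures.
From mathcomp Require Import all_boot all_order all_algebra.
From mathcomp Require Import boolp classical_sets reals topology normedtype derive.
From Stdlib Require Import ClassicalEpsilon.
Set Implicit Arguments. Unset Strict Implicit. Unset Printing Implicit Defensive.
Import Order.TTheory GRing.Theory Num.Theory.
Local Open Scope ring_scope.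

(* Conventions:
   - a "matrix" is a function nat -> nat -> R, only entries in the stated
     range matter (sizes are passed explicitly);
   - a tensor of size n_1 x ... x n_d is a function nat -> R on its
     colexicographic linear index l = i_1 + n_1 i_2 + n_1 n_2 i_3 + ...,
     only l < n_1 * ... * n_d matters;
   - a TT core family is U : nat -> nat -> nat -> nat -> R,
     U k alpha i beta = U_k(alpha, i, beta) (k = 1..d). *)

Section TT.
Variable R : realType.

Definition mat := nat -> nat -> R.
Definition tensor := nat -> R.
Definition core3 := nat -> nat -> nat -> R.
Definition cores := nat -> core3.

Definition mmul (p : nat) (A B : mat) : mat :=
  fun a b => \sum_(l < p) A a l * B l b.
Definition mtr (A : mat) : mat := fun a b => A b a.
Definition msub (A B : mat) : mat := fun a b => A a b - B a b.
Definition idm : mat := fun a b => (a == b)%:R.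
Definition ones11 : mat := fun _ _ => 1.
Definition kron (m2 n2 : nat) (A B : mat) : mat :=
  fun a b => A (a %/ m2)%N (b %/ n2)%N * B (a %% m2)%N (b %% n2)%N.
Definition mxeq (m n : nat) (A B : mat) : Prop :=
  forall a b, (a < m)%N -> (b < n)%N -> A a b = B a b.
Definition to_mx (m n : nat) (A : mat) : 'M[R]_(m, n) :=
  \matrix_(a < m, b < n) A a b.

Variables (d : nat) (n r : nat -> nat).

Definition Pn (k : nat) : nat := (\prod_(1 <= m < k.+1) n m)%N.
Definition Qn (k : nat) : nat := (\prod_(k.+1 <= m < d.+1) n m)%N.
Definition Ntot : nat := Pn d.

Definition flat (k : nat) (Z : tensor) : mat := fun a b => Z (a + Pn k * b)%N.
Definition unflat (k : nat) (A : mat) : tensor :=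
  fun l => A (l %% Pn k)%N (l %/ Pn k)%N.

Definition inM (Y : tensor) : Prop :=
  forall mu, (1 <= mu <= d.-1)%N ->
    \rank (to_mx (Pn mu) (Qn mu) (flat mu Y)) = r mu.

Definition cL (k : nat) (G : core3) : mat :=
  fun a b => G (a %% r k.-1)%N (a %/ r k.-1)%N b.
Definition cR (k : nat) (G : core3) : mat :=
  fun a b => G a (b %% n k)%N (b %/ n k)%N.

Fixpoint Xle (U : cores) (k : nat) : mat :=
  match k with
  | 0 => ones11
  | k'.+1 => mmul (n k'.+1 * r k') (kron (Pn k') (r k') idm (Xle U k'))
                  (cL k'.+1 (U k'.+1))
  end.

(* XgeT_aux U m = \tilde X_{>= d+1-m}^T, with
   \tilde X_{>= k}^T = \tilde U_k^R (\tilde X_{>= k+1}^T (x) I_{n_k}) *)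
Fixpoint XgeT_aux (U : cores) (m : nat) : mat :=
  match m with
  | 0 => ones11
  | m'.+1 => mmul (n (d - m')%N * r (d - m')%N)%N (cR (d - m')%N (U (d - m')%N))
                  (kron (n (d - m')%N) (n (d - m')%N) (XgeT_aux U m') idm)
  end.
Definition XgeT (U : cores) (k : nat) : mat := XgeT_aux U (d.+1 - k).

Definition lo_decomp (Y : tensor) (U : cores) : Prop :=
  (forall l, (l < Ntot)%N -> Y l = Xle U d l 0%N) /\
  forall k, (1 <= k <= d.-1)%N ->
    mxeq (r k) (r k) (mmul (n k * r k.-1) (mtr (cL k (U k))) (cL k (U k))) idm.

Definition ro_decomp (Y : tensor) (U : cores) : Prop :=
  (forall l, (l < Ntot)%N -> Y l = XgeT U 1 0%N l) /\
  forall k, (2 <= k <= d)%N ->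
    mxeq (r k.-1) (r k.-1) (mmul (n k * r k) (cR k (U k)) (mtr (cR k (U k)))) idm.

Definition zero_cores : cores := fun _ _ _ _ => 0.
Definition lo_of (Y : tensor) : cores :=
  epsilon (inhabits zero_cores) (lo_decomp Y).
Definition ro_of (Y : tensor) : cores :=
  epsilon (inhabits zero_cores) (ro_decomp Y).

Definition Proj (k : nat) (Y Z : tensor) : tensor :=
  let U := lo_of Y in
  let Ut := ro_of Y in
  let L1 := kron (Pn k.-1) (Pn k.-1) idm
              (mmul (r k.-1) (Xle U k.-1) (mtr (Xle U k.-1))) in
  let L := if (k < d)%N then msub L1 (mmul (r k) (Xle U k) (mtr (Xle U k)))
           else L1 in
  let Rt := mmul (r k) (mtr (XgeT Ut k.+1)) (XgeT Ut k.+1) in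
  unflat k (mmul (Qn k) (mmul (Pn k) L (flat k Z)) Rt).

End TT.

Definition smooth (R : realType) (f : R -> R) : Prop :=
  forall (k : nat) (x : R), @derivable R R^o R^o (iter k (@derive1 R R^o) f) x 1.

From HB Require Import structures.
From mathcomp Require Import all_boot all_order all_algebra.
From mathcomp Require Import boolp classical_sets reals topology normedtype derive.
From mathcomp Require Import zify.
From Stdlib Require Import ClassicalEpsilon.
Set Implicit Arguments. Unset Strict Implicit. Unset Printing Implicit Defensive.
Import Order.TTheory GRing.Theory Num.Theory.
Local Open Scope ring_scope.
Local Open Scope classical_set_scope.
Import numFieldNormedType.Exports.

(* Write L Z^{<i>} R for the flattening of P_X^i(Z), where L and R are built from
   the decompositions X', X~' chosen by [Proj].  Since X has TT-rank r, the
   interface matrices of any two minimal decompositions span the same column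
   (resp. row) space, that of the flattening, so X'_{<=k} = X_{<=k} D and
   X~'_{>=k+1}^T = D' X~_{>=k+1}^T.  Together with X'_{<=i} = (I (x) X'_{<=i-1}) U'_i^L
   this makes L factor as (I (x) X_{<=i-1}) N and R as M X~_{>=i+1}^T, which gives
   the representation; it is unique because I (x) X_{<=i-1} has orthonormal columns
   and X~_{>=i+1}^T orthonormal rows. *)

Lemma lin_edivn {x q : nat} (j : nat) : (x < q)%N ->
  ((x + q * j) %/ q = j)%N /\ ((x + q * j) %% q = x)%N.
Proof.
move=> hx; have q0 : (0 < q)%N by apply: leq_ltn_trans hx.
split; first by rewrite mulnC divnDMl // divn_small.
by rewrite mulnC addnC modnMDl modn_small.
Qed.

Lemma lin_ltn (a p x e : nat) : (a < p)%N -> (x < e)%N -> (a + p * x < p * e)%N.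
Proof.
move=> ha hx; apply: (@leq_trans (p * x.+1)); first by rewrite mulnS ltn_add2r.
by rewrite leq_mul2l hx orbT.
Qed.

Definition lin_ord {m k} (c : 'I_m) (j : 'I_k) : 'I_(m * k) :=
  Ordinal (@lin_ltn c m j k (ltn_ord c) (ltn_ord j)).

Section Sums.
Variable V : nmodType.

Lemma sum_nat_mul (m k : nat) (f : nat -> V) :
  \sum_(l < m * k) f l = \sum_(j < k) \sum_(c < m) f (c + m * j)%N.
Proof.
elim: k => [|k IH]; first by rewrite muln0 !big_ord0.
rewrite big_ord_recr /= -IH -!(big_mkord xpredT) mulnSr.
rewrite (@big_cat_nat _ _ _ (m * k)%N) //= ?leq_addr //; congr (_ + _).
by rewrite -{1}[(m * k)%N]add0n big_addn addKn big_mkord.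
Qed.

Lemma sum_ord_mul (m k : nat) (F : 'I_(m * k) -> V) :
  \sum_(l < m * k) F l = \sum_(j < k) \sum_(c < m) F (lin_ord c j).
Proof.
pose f l := if (insub l : option 'I_(m * k)) is Some l' then F l' else 0.
have := sum_nat_mul m k f; rewrite /f; under eq_bigr do rewrite valK.
move=> ->; apply: eq_bigr => j _; apply: eq_bigr => c _.
by rewrite -[(c + m * j)%N]/(nat_of_ord (lin_ord c j)) valK.
Qed.

End Sums.

Lemma sum_delta {S : pzSemiRingType} {m a : nat} (F : 'I_m -> S) (ha : (a < m)%N) :
  \sum_(j < m) (a == j)%:R * F j = F (Ordinal ha).
Proof.
rewrite (bigD1 (Ordinal ha)) //= eqxx mul1r big1 ?addr0 //.
move=> j /eqP hj; case: eqP => [e|_]; last by rewrite mul0r.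
by exfalso; apply: hj; apply: val_inj; rewrite /= e.
Qed.

Lemma orthonormal_sandwich_inj (S : pzRingType) m p q s
    (K : 'M[S]_(m, p)) (T : 'M[S]_(q, s)) (B B' : 'M[S]_(p, q)) :
  K^T *m K = 1%:M -> T *m T^T = 1%:M -> K *m B *m T = K *m B' *m T -> B = B'.
Proof.
move=> hK hT /(congr1 (fun M => K^T *m M *m T^T)) /=.
by rewrite !mulmxA hK !mul1mx -!mulmxA hT !mulmx1.
Qed.

Lemma full_rank_factor_right (F : fieldType) (p q s : nat)
    (M : 'M[F]_(p, q)) (T T' : 'M[F]_(s, q)) G G' :
  M = G *m T -> M = G' *m T' -> \rank M = s -> exists D, T' = D *m T.
Proof.
move=> h1 h2 hr; apply/submxP.
have MT : (M <= T)%MS by rewrite h1 submxMl.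
have MT' : (M <= T')%MS by rewrite h2 submxMl.
have T'M : (T' <= M)%MS.
  have [le <-] := mxrank_leqif_sup MT'.
  by rewrite eqn_leq le hr rank_leq_row.
exact: submx_trans T'M MT.
Qed.

Lemma full_rank_factor_left (F : fieldType) (p q s : nat)
    (M : 'M[F]_(p, q)) (A A' : 'M[F]_(p, s)) G G' :
  M = A *m G -> M = A' *m G' -> \rank M = s -> exists D, A' = A *m D.
Proof.
move=> h1 h2 hr.
have [D hD] := @full_rank_factor_right _ _ _ _ M^T A^T A'^T G^T G'^T
  ltac:(by rewrite h1 trmx_mul) ltac:(by rewrite h2 trmx_mul) ltac:(by rewrite mxrank_tr).
by exists D^T; rewrite -[A']trmxK hD trmx_mul trmxK.
Qed.

Section FunctionMatrices.
Variable R : realType.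
Implicit Types A B : mat R.

Lemma mxeqP m q A B : mxeq m q A B <-> to_mx m q A = to_mx m q B.
Proof.
split=> [h|h a b ha hb]; first by apply/matrixP => a b; rewrite !mxE h.
by have := congr1 (fun M : 'M[R]_(m, q) => M (Ordinal ha) (Ordinal hb)) h; rewrite !mxE.
Qed.

Lemma to_mx_mmul m p q A B : to_mx m q (mmul p A B) = to_mx m p A *m to_mx p q B.
Proof. by apply/matrixP => a b; rewrite !mxE; apply: eq_bigr => l _; rewrite !mxE. Qed.

Lemma to_mx_mtr m q A : to_mx m q (mtr A) = (to_mx q m A)^T.
Proof. by apply/matrixP => a b; rewrite !mxE. Qed.

Lemma to_mx_msub m q A B : to_mx m q (msub A B) = to_mx m q A - to_mx m q B.
Proof. by apply/matrixP => a b; rewrite !mxE. Qed.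

Lemma to_mx_idm m : to_mx m m (@idm R) = 1%:M.
Proof. by apply/matrixP => a b; rewrite !mxE. Qed.

Definition mat_of m q (M : 'M[R]_(m, q)) : mat R :=
  fun a b => if insub a : option 'I_m is Some a' then
               if insub b : option 'I_q is Some b' then M a' b' else 0
             else 0.

Lemma to_mx_mat_of m q (M : 'M[R]_(m, q)) : to_mx m q (mat_of M) = M.
Proof. by apply/matrixP => a b; rewrite !mxE /mat_of !valK. Qed.

Definition kronI_mx (m p q : nat) A : 'M[R]_(m * p, m * q) :=
  to_mx (m * p) (m * q) (kron p q (@idm R) A).

Lemma kronI_mx_eq m p q A B : to_mx p q A = to_mx p q B ->
  kronI_mx m p q A = kronI_mx m p q B.
Proof.
move/mxeqP => h; apply/mxeqP => a b ha hb; rewrite /kron h //.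
  by rewrite ltn_mod; case: p ha {h} => //; rewrite muln0.
by rewrite ltn_mod; case: q hb {h} => //; rewrite muln0.
Qed.

Lemma kronI_mx_mul m p q s A B :
  kronI_mx m p q A *m kronI_mx m q s B = kronI_mx m p s (mmul q A B).
Proof.
rewrite /kronI_mx -to_mx_mmul; apply/mxeqP => a c ha hc.
have p0 : (0 < p)%N by case: p ha => //; rewrite muln0.
have hp : (a %/ p < m)%N by rewrite ltn_divLR // mulnC.
rewrite /mmul /kron mulnC sum_ord_mul /=.
under eq_bigr => j _.
  under eq_bigr => x _.
    have [-> ->] := lin_edivn j (ltn_ord x).
    rewrite /idm -!mulrA [A _ _ * _]mulrCA.
  over.
  rewrite -!mulr_sumr.
over.
by rewrite /= (@sum_delta R _ _ _ hp).
Qed.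

Lemma kronI_mx_tr m p q A : (kronI_mx m p q A)^T = kronI_mx m q p (mtr A).
Proof. by rewrite -to_mx_mtr; apply/mxeqP => a b _ _; rewrite /mtr /kron /idm eq_sym. Qed.

Lemma kronI_mx_idm m p : kronI_mx m p p (@idm R) = 1%:M.
Proof.
apply/matrixP => a b; rewrite !mxE /kron /idm -natrM.
case: (eqVneq a b) => [->|ne]; first by rewrite !eqxx.
case: eqP => // e1; case: eqP => // e2; exfalso; move/eqP: ne; apply.
by apply: val_inj; rewrite /= (divn_eq a p) (divn_eq b p) e1 e2.
Qed.

Lemma kronI_mx_orth m p q A : (to_mx p q A)^T *m to_mx p q A = 1%:M ->
  (kronI_mx m p q A)^T *m kronI_mx m p q A = 1%:M.
Proof.
move=> hA; rewrite kronI_mx_tr kronI_mx_mul -kronI_mx_idm; apply: kronI_mx_eq.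
by rewrite to_mx_mmul to_mx_mtr hA to_mx_idm.
Qed.

End FunctionMatrices.

Section TensorTrain.
Variable R : realType.
Variables (d : nat) (n r : nat -> nat).
Hypothesis n_gt0 : forall k, (1 <= k <= d)%N -> (0 < n k)%N.
Implicit Types (U : cores R) (X Y : tensor R).

Definition nprod a b := (\prod_(a <= t < b) n t)%N.

Lemma nprod_cat a b c : (a <= b)%N -> (b <= c)%N -> nprod a c = (nprod a b * nprod b c)%N.
Proof. by move=> hab hbc; rewrite /nprod (@big_cat_nat _ _ _ b). Qed.

Lemma nprodnn a : nprod a a = 1%N.
Proof. by rewrite /nprod big_geq. Qed.

Lemma nprodS a : nprod a a.+1 = n a.
Proof. by rewrite /nprod big_nat1. Qed.

Lemma nprod_gt0 a b : (1 <= a)%N -> (b <= d.+1)%N -> (0 < nprod a b)%N.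
Proof.
move=> ha hb; rewrite /nprod big_nat_cond; apply: (big_ind (fun x => 0 < x)%N) => //.
  by move=> x y; rewrite muln_gt0 => -> ->.
move=> t /andP [/andP [h1 h2] _]; apply: n_gt0; rewrite (leq_trans ha h1) /=.
by rewrite -ltnS (leq_trans h2 hb).
Qed.

Lemma Pn0 : Pn n 0 = 1%N.
Proof. by rewrite /Pn big_geq. Qed.

Lemma PnS k : Pn n k.+1 = (Pn n k * n k.+1)%N.
Proof. by rewrite /Pn big_nat_recr. Qed.

Lemma Qn_d : Qn d n d = 1%N.
Proof. by rewrite /Qn big_geq. Qed.

Lemma QnS k : (k < d)%N -> Qn d n k = (n k.+1 * Qn d n k.+1)%N.
Proof. by move=> h; rewrite /Qn big_ltn. Qed.

Lemma Pn_Qn k : (k <= d)%N -> (Pn n k * Qn d n k)%N = Ntot d n.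
Proof. by move=> h; rewrite /Ntot /Pn /Qn -/(nprod 1 k.+1) -/(nprod k.+1 d.+1) -nprod_cat. Qed.

Definition Xle_mx U k : 'M[R]_(Pn n k, r k) := to_mx _ _ (Xle n r U k).
Definition XgtT_mx U k : 'M[R]_(r k, Qn d n k) := to_mx _ _ (XgeT d n r U k.+1).
Definition IXle_mx U k : 'M[R]_(n k.+1 * Pn n k, n k.+1 * r k) :=
  kronI_mx (n k.+1) (Pn n k) (r k) (Xle n r U k).

Lemma Xle_step U m a i b : (a < Pn n m)%N -> (i < n m.+1)%N ->
  Xle n r U m.+1 (a + Pn n m * i)%N b = \sum_(al < r m) Xle n r U m a al * U m.+1 al i b.
Proof.
move=> ha hi /=; rewrite /mmul /kron /cL /= mulnC sum_ord_mul /=.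
under eq_bigr => j _.
  under eq_bigr => x _.
    have [-> ->] := lin_edivn j (ltn_ord x).
    have [-> ->] := lin_edivn i ha.
    rewrite /idm -mulrA.
  over.
  rewrite -mulr_sumr.
over.
by rewrite /= (@sum_delta R _ _ _ hi).
Qed.

Lemma Xle_split U k s : (k + s <= d)%N -> exists T : core3 R,
  forall a b be, (a < Pn n k)%N -> (b < nprod k.+1 (k + s).+1)%N -> (be < r (k + s))%N ->
  Xle n r U (k + s) (a + Pn n k * b)%N be = \sum_(al < r k) Xle n r U k a al * T al b be.
Proof.
elim: s => [|s IH] hks.
  exists (fun al _ be => @idm R al be) => a b be ha.
  rewrite addn0 nprodnn ltnS leqn0 => /eqP -> hbe.
  rewrite muln0 addn0; under eq_bigr do rewrite mulrC /idm eq_sym.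
  by rewrite (@sum_delta R _ _ _ hbe).
have [T HT] := IH ltac:(lia).
set e := nprod k.+1 (k + s).+1.
have PE : Pn n (k + s) = (Pn n k * e)%N.
  by rewrite /Pn -/(nprod 1 (k + s).+1) -/(nprod 1 k.+1) (@nprod_cat 1 k.+1) // ltnS leq_addr.
have e0 : (0 < e)%N by apply: nprod_gt0 => //; lia.
exists (fun al b be => \sum_(g < r (k + s)) T al (b %% e)%N g * U (k + s).+1 g (b %/ e)%N be).
move=> a b be ha hb hbe; rewrite addnS.
have hx : (b %% e < e)%N by rewrite ltn_pmod.
have hy : (b %/ e < n (k + s).+1)%N.
  rewrite ltn_divLR // mulnC; move: hb; rewrite addnS (@nprod_cat k.+1 (k + s).+1) ?nprodS //.
  by rewrite ltnS leq_addr.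
have -> : (a + Pn n k * b = (a + Pn n k * (b %% e)) + Pn n (k + s) * (b %/ e))%N.
  by rewrite PE {1}(divn_eq b e); nia.
rewrite Xle_step //; last by rewrite PE lin_ltn.
under eq_bigr => g _ do rewrite HT //.
under eq_bigr do rewrite mulr_suml.
rewrite exchange_big /=; apply: eq_bigr => al _; rewrite mulr_sumr.
by apply: eq_bigr => g _; rewrite mulrA.
Qed.

Lemma flat_Xle_factor {Y U k} : r d = 1%N -> lo_decomp d n r Y U -> (k <= d)%N ->
  exists G : 'M[R]_(r k, Qn d n k), to_mx _ _ (flat n k Y) = Xle_mx U k *m G.
Proof.
move=> rd [hY _] hkd; have [T HT] := @Xle_split U k (d - k) ltac:(by rewrite subnKC).
rewrite (subnKC hkd) in HT.
exists (to_mx _ _ (fun al b => T al b 0%N)); rewrite -to_mx_mmul; apply/mxeqP => a b ha hb.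
rewrite /flat hY; last by rewrite -(@Pn_Qn k hkd) lin_ltn.
by rewrite HT // rd.
Qed.

Lemma Xle_mx_orth {Y U k} : r 0 = 1%N -> lo_decomp d n r Y U -> (k <= d.-1)%N ->
  (Xle_mx U k)^T *m Xle_mx U k = 1%:M.
Proof.
move=> r0 [_ hU]; rewrite -to_mx_mtr -to_mx_mmul.
elim: k => [|k IH] hk.
  apply/matrixP => b b'; rewrite !mxE.
  have -> : b = b' by move: b b'; rewrite r0 => b b'; rewrite !ord1.
  by rewrite eqxx /mmul Pn0 big_ord1 /mtr /= mulr1.
have IH' (al al' : 'I_(r k)) :
    \sum_(c < Pn n k) Xle n r U k c al * Xle n r U k c al' = (al == al')%:R.
  by move/matrixP: (IH (ltnW hk)) => /(_ al al'); rewrite !mxE.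
have hdk : (k < d)%N := leq_trans hk (leq_pred d).
apply/matrixP => b b'; rewrite !mxE.
have hck := hU k.+1 hk b b' (ltn_ord b) (ltn_ord b').
rewrite -[RHS]/(@idm R b b') -hck /mmul PnS sum_ord_mul [(n k.+1 * _)%N]mulnC sum_ord_mul.
apply: eq_bigr => j _.
under eq_bigr => c _ do rewrite /mtr -[nat_of_ord (lin_ord c j)]/(c + Pn n k * j)%N !Xle_step //.
rewrite /cL /mtr /=.
under [RHS]eq_bigr => c _ do
  rewrite (proj1 (lin_edivn j (ltn_ord c))) (proj2 (lin_edivn j (ltn_ord c))).
under eq_bigr => c _ do rewrite big_distrlr /=.
rewrite exchange_big; under eq_bigr => al _ do rewrite exchange_big.
apply: eq_bigr => al _ /=.
under eq_bigr => al' _ do under eq_bigr => c _ do rewrite mulrACA.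
under eq_bigr => al' _ do rewrite -mulr_suml IH'.
by rewrite (@sum_delta R _ _ (fun al' : 'I_(r k) => U k.+1 al j b * U k.+1 al' j b') (ltn_ord al)).
Qed.

Lemma IXle_mx_orth {Y U k} : r 0 = 1%N -> lo_decomp d n r Y U -> (k <= d.-1)%N ->
  (IXle_mx U k)^T *m IXle_mx U k = 1%:M.
Proof. by move=> r0 hU hk; apply/kronI_mx_orth/(Xle_mx_orth r0 hU hk). Qed.


Lemma XgeT_step U k al i b : (1 <= k <= d)%N -> (i < n k)%N ->
  XgeT d n r U k al (i + n k * b)%N = \sum_(be < r k) U k al i be * XgeT d n r U k.+1 be b.
Proof.
move=> /andP [k1 kd] hi; rewrite /XgeT subSn // subSS /= subKn //.
rewrite /mmul /kron /cR sum_ord_mul.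
apply: eq_bigr => j _ /=.
under eq_bigr => c _.
  have [-> ->] := lin_edivn j (ltn_ord c).
  have [-> ->] := lin_edivn b hi.
  rewrite /idm mulrA mulrC eq_sym.
over.
by rewrite /= (@sum_delta R _ _ _ hi).
Qed.

Lemma XgeT_split U k s j : (j + s)%N = k -> (1 <= j)%N -> (k <= d.+1)%N ->
  exists S : core3 R, forall al c b, (al < r j.-1)%N -> (c < nprod j k)%N ->
  XgeT d n r U j al (c + nprod j k * b)%N = \sum_(be < r k.-1) S al c be * XgeT d n r U k be b.
Proof.
elim: s j => [|s IH] j hjs j1 hk.
  rewrite addn0 in hjs; subst j.
  exists (fun al _ be => @idm R al be) => al c b hal; rewrite nprodnn ltnS leqn0 => /eqP ->.
  by rewrite mul1n add0n /idm (@sum_delta R _ _ (fun be : 'I_(r k.-1) => XgeT d n r U k be b) hal).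
have [S HS] := IH j.+1 ltac:(lia) ltac:(lia) hk.
have nj0 : (0 < n j)%N by apply: n_gt0; lia.
have EE : nprod j k = (n j * nprod j.+1 k)%N by rewrite (@nprod_cat j j.+1) ?nprodS //; lia.
exists (fun al c ga => \sum_(be < r j) U j al (c %% n j)%N be * S be (c %/ n j)%N ga).
move=> al c b hal hc.
have hx : (c %% n j < n j)%N by rewrite ltn_pmod.
have hy : (c %/ n j < nprod j.+1 k)%N by rewrite ltn_divLR // mulnC -EE.
have -> : (c + nprod j k * b = c %% n j + n j * (c %/ n j + nprod j.+1 k * b))%N.
  by rewrite EE {1}(divn_eq c (n j)); nia.
rewrite XgeT_step //; last by lia.
under eq_bigr => be _ do rewrite HS //.
under eq_bigr do rewrite mulr_sumr.
rewrite exchange_big /=; apply: eq_bigr => ga _; rewrite mulr_suml.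
by apply: eq_bigr => be _; rewrite mulrA.
Qed.

Lemma flat_XgtT_factor {Y U k} : r 0 = 1%N -> ro_decomp d n r Y U -> (k <= d)%N ->
  exists G : 'M[R]_(Pn n k, r k), to_mx _ _ (flat n k Y) = G *m XgtT_mx U k.
Proof.
move=> r0 [hY _] hkd; have [S HS] := @XgeT_split U k.+1 k 1 (add1n k) (leqnn 1) hkd.
exists (to_mx _ _ (fun c be => S 0%N c be)); rewrite -to_mx_mmul; apply/mxeqP => a b ha hb.
rewrite /flat hY; last by rewrite -(@Pn_Qn k hkd) lin_ltn.
by rewrite HS // r0.
Qed.

Lemma XgtT_mx_orth {Y U k} : r d = 1%N -> ro_decomp d n r Y U -> (1 <= k <= d)%N ->
  XgtT_mx U k *m (XgtT_mx U k)^T = 1%:M.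
Proof.
move=> rd [_ hU] /andP [k1 kd]; rewrite -to_mx_mtr -to_mx_mmul.
have [s hks] : exists s, (k + s = d)%N by exists (d - k)%N; lia.
elim: s k k1 kd hks => [|s IH] k k1 kd hks.
  rewrite addn0 in hks; subst k.
  apply/matrixP => b b'; rewrite !mxE.
  have -> : b = b' by move: b b'; rewrite rd => b b'; rewrite !ord1.
  by rewrite eqxx /mmul Qn_d big_ord1 /mtr /XgeT subnn /= mulr1.
have IH' (be be' : 'I_(r k.+1)) :
    \sum_(c < Qn d n k.+1) XgeT d n r U k.+2 be c * XgeT d n r U k.+2 be' c = (be == be')%:R.
  by move/matrixP: (IH k.+1 isT ltac:(lia) ltac:(lia)) => /(_ be be'); rewrite !mxE.
have hkd : (k < d)%N by lia.
apply/matrixP => b b'; rewrite !mxE /=.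
have hck := hU k.+1 ltac:(lia) b b' (ltn_ord b) (ltn_ord b').
rewrite -[RHS]/(@idm R b b') -hck /mmul (@QnS k hkd) sum_ord_mul sum_ord_mul /mtr /cR /=.
have hk1 : (1 <= k.+1 <= d)%N by lia.
under eq_bigr => j _ do under eq_bigr => c _ do rewrite !XgeT_step //.
under [RHS]eq_bigr => j _ do under eq_bigr => c _ do
  rewrite (proj1 (lin_edivn j (ltn_ord c))) (proj2 (lin_edivn j (ltn_ord c))).
rewrite exchange_big [RHS]exchange_big /=; apply: eq_bigr => c _.
under eq_bigr => j _ do rewrite big_distrlr /=.
rewrite exchange_big /=; apply: eq_bigr => be _.
rewrite exchange_big /=.
under eq_bigr => be' _ do under eq_bigr => j _ do rewrite mulrACA.
under eq_bigr => be' _ do rewrite -mulr_sumr IH' mulrC.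
by rewrite (@sum_delta R _ _ _ (ltn_ord be)).
Qed.


Lemma lo_ofP {Y U} : lo_decomp d n r Y U -> lo_decomp d n r Y (lo_of d n r Y).
Proof. by move=> hU; apply: epsilon_spec; exists U. Qed.

Lemma ro_ofP {Y U} : ro_decomp d n r Y U -> ro_decomp d n r Y (ro_of d n r Y).
Proof. by move=> hU; apply: epsilon_spec; exists U. Qed.

Lemma Xle_mx_change {Y U U' k} : r d = 1%N -> inM d n r Y ->
  lo_decomp d n r Y U -> lo_decomp d n r Y U' -> (k < d)%N ->
  exists D, Xle_mx U' k = Xle_mx U k *m D.
Proof.
move=> rd hY hU hU'; case: k => [|k] hk; first by exists 1%:M; rewrite mulmx1.
have [G hG] := flat_Xle_factor rd hU (ltnW hk).
have [G' hG'] := flat_Xle_factor rd hU' (ltnW hk).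
by apply: full_rank_factor_left hG hG' _; apply: hY; lia.
Qed.

Lemma XgtT_mx_change {Y U U' k} : r 0 = 1%N -> inM d n r Y ->
  ro_decomp d n r Y U -> ro_decomp d n r Y U' -> (1 <= k <= d)%N ->
  exists D, XgtT_mx U' k = D *m XgtT_mx U k.
Proof.
move=> r0 hY hU hU' hk; case: (ltnP k d) => hkd.
  have [G hG] := flat_XgtT_factor r0 hU (ltnW hkd).
  have [G' hG'] := flat_XgtT_factor r0 hU' (ltnW hkd).
  by apply: full_rank_factor_right hG hG' _; apply: hY; lia.
have -> : k = d by lia.
by exists 1%:M; rewrite mul1mx /XgtT_mx /XgeT subnn.
Qed.

Definition Proj_left k Y : mat R :=
  let U := lo_of d n r Y in
  let L1 := kron (Pn n k.-1) (Pn n k.-1) (@idm R)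
              (mmul (r k.-1) (Xle n r U k.-1) (mtr (Xle n r U k.-1))) in
  if (k < d)%N then msub L1 (mmul (r k) (Xle n r U k) (mtr (Xle n r U k))) else L1.

Definition Proj_right k Y : mat R :=
  let Ut := ro_of d n r Y in
  mmul (r k) (mtr (XgeT d n r Ut k.+1)) (XgeT d n r Ut k.+1).

Lemma flat_Proj k Y Z :
  to_mx (Pn n k) (Qn d n k) (flat n k (Proj d n r k Y Z)) =
  to_mx _ (Pn n k) (Proj_left k Y) *m to_mx _ (Qn d n k) (flat n k Z) *m
  to_mx _ _ (Proj_right k Y).
Proof.
rewrite -!to_mx_mmul; apply/mxeqP => a b ha hb.
by rewrite {1}/flat /Proj /unflat; have [-> ->] := lin_edivn b ha.
Qed.

Lemma Proj_left_factor {X U k} :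
  r d = 1%N -> inM d n r X -> lo_decomp d n r X U -> (k < d)%N ->
  exists N : 'M[R]_(n k.+1 * r k, n k.+1 * Pn n k),
    to_mx _ _ (Proj_left k.+1 X) = IXle_mx U k *m N.
Proof.
move=> rd hX hU hk; set U' := lo_of d n r X.
have [D hD] := Xle_mx_change rd hX hU (lo_ofP hU) hk.
have L1E : to_mx (n k.+1 * Pn n k) (n k.+1 * Pn n k)
      (kron (Pn n k) (Pn n k) (@idm R) (mmul (r k) (Xle n r U' k) (mtr (Xle n r U' k)))) =
    IXle_mx U k *m kronI_mx (n k.+1) (r k) (Pn n k) (mat_of (D *m (Xle_mx U' k)^T)).
  rewrite kronI_mx_mul; apply: kronI_mx_eq.
  by rewrite !to_mx_mmul to_mx_mtr to_mx_mat_of -/(Xle_mx U' k) {1}hD mulmxA.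
rewrite /Proj_left /=; case: ifP => _; last by eexists; exact: L1E.
have XU : to_mx (n k.+1 * Pn n k) (r k.+1) (Xle n r U' k.+1) = IXle_mx U k *m
    (kronI_mx (n k.+1) (r k) (r k) (mat_of D) *m to_mx _ _ (cL r k.+1 (U' k.+1))).
  rewrite [Xle _ _ _ k.+1]/= to_mx_mmul mulmxA kronI_mx_mul; congr (_ *m _).
  by apply: kronI_mx_eq; rewrite to_mx_mmul to_mx_mat_of; exact: hD.
by eexists; rewrite to_mx_msub L1E to_mx_mmul to_mx_mtr XU -mulmxA -mulmxBr.
Qed.

Lemma Proj_right_factor {X Ut k} :
  r 0 = 1%N -> inM d n r X -> ro_decomp d n r X Ut -> (1 <= k <= d)%N ->
  exists M : 'M[R]_(Qn d n k, r k), to_mx _ _ (Proj_right k X) = M *m XgtT_mx Ut k.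
Proof.
move=> r0 hX hUt hk; have [D hD] := XgtT_mx_change r0 hX hUt (ro_ofP hUt) hk.
exists ((XgtT_mx (ro_of d n r X) k)^T *m D).
by rewrite /Proj_right to_mx_mmul to_mx_mtr -/(XgtT_mx _ k) -mulmxA -hD.
Qed.

Lemma Proj_range {X U Ut} Y {k} : r 0 = 1%N -> r d = 1%N -> inM d n r X ->
  lo_decomp d n r X U -> ro_decomp d n r X Ut -> (k < d)%N ->
  exists B : 'M[R]_(n k.+1 * r k, r k.+1),
    to_mx (n k.+1 * Pn n k) _ (flat n k.+1 (Proj d n r k.+1 X Y)) =
    IXle_mx U k *m B *m XgtT_mx Ut k.+1.
Proof.
move=> r0 rd hX hU hUt hk.
have [N hN] := Proj_left_factor rd hX hU hk.
have [M hM] := @Proj_right_factor X Ut k.+1 r0 hX hUt hk.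
have := flat_Proj k.+1 X Y; rewrite PnS [(Pn n k * _)%N]mulnC hN hM => ->.
by exists (N *m to_mx _ _ (flat n k.+1 Y) *m M); rewrite !mulmxA.
Qed.

Definition fold_core k (A : mat R) : core3 R := fun al i be => A (al + r k.-1 * i)%N be.

Lemma cL_fold_core k A : cL r k (fold_core k A) = A.
Proof.
by apply/funext => a; apply/funext => b; rewrite /cL /fold_core addnC mulnC -divn_eq.
Qed.

End TensorTrain.

Theorem lemma11 (R : realType) (d : nat) (n r : nat -> nat)
  (hd : (2 <= d)%N)
  (hn : forall k, (1 <= k <= d)%N -> (0 < n k)%N)
  (hr0 : r 0%N = 1%N) (hrd : r d = 1%N)
  (X : tensor R) (hX : inM d n r X)
  (U Ut : cores R) (hU : lo_decomp d n r X U) (hUt : ro_decomp d n r X Ut)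
  (c : R -> tensor R)
  (hc_smooth : forall l, (l < Ntot d n)%N -> smooth (fun t => c t l))
  (hcM : forall t, inM d n r (c t))
  (hc0 : forall l, (l < Ntot d n)%N -> c 0 l = X l)
  (V : tensor R)
  (hV : forall l, (l < Ntot d n)%N -> @is_derive R R^o R^o 0 1 (fun t => c t l) (V l))
  (Z : tensor R) (i j : nat)
  (hi : (1 <= i <= d)%N) (hj : (1 <= j <= d)%N)
  (DPZ : tensor R)
  (hDPZ : forall l, (l < Ntot d n)%N ->
     (fun t => (Proj d n r j (c t) Z l - Proj d n r j X Z l) / t)
       @ (0 : R)^' --> DPZ l) :
  let W := Proj d n r i X DPZ in
  let repr (B : mat R) : mat R :=
    mmul (r i)
      (mmul (n i * r i.-1) (kron (Pn n i.-1) (r i.-1) (@idm R) (Xle n r U i.-1)) B)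
      (XgeT d n r Ut i.+1) in
  exists dV : core3 R,
    mxeq (Pn n i) (Qn d n i) (flat n i W) (repr (cL r i dV)) /\
    forall B : mat R,
      mxeq (Pn n i) (Qn d n i) (flat n i W) (repr B) ->
      mxeq (n i * r i.-1) (r i) B (cL r i dV).
Proof.
case: i hi => [//|k] hk W repr.
have kd : (k < d)%N by lia.
have [B hB] := Proj_range hn DPZ hr0 hrd hX hU hUt kd.
have reprE B' : to_mx _ (Qn d n k.+1) (repr B') =
    IXle_mx n r U k *m to_mx _ _ B' *m XgtT_mx d n r Ut k.+1.
  by rewrite /repr !to_mx_mmul.
exists (fold_core r k.+1 (mat_of B)); rewrite PnS mulnC cL_fold_core; split.
  by apply/mxeqP; rewrite hB reprE to_mx_mat_of.
move=> B' /mxeqP; rewrite hB reprE => hB'; apply/mxeqP; rewrite to_mx_mat_of.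
apply: orthonormal_sandwich_inj (esym hB').
  by apply: (IXle_mx_orth hr0 hU); lia.
by apply: (XgtT_mx_orth hrd hUt); lia.
Qed.
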